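(* Let $m\ge2$, $k\ge2$, $n\ge1$, $\mathcal{A}=(a_{i_1i_2\cdots i_m})\in\mathbb{C}^{[m,n]}$ and $\mathcal{B}=(b_{i_1i_2\cdots i_k})\in\mathbb{C}^{[k,n]}$, and suppose the digraph $\Gamma_{\mathcal{A}\mathcal{B}}$ is weakly connected. For $i\in[n]$ let $c_{i\cdots i}=\sum_{i_2,\ldots,i_m=1}^n a_{ii_2\cdots i_m}b_{i_2i\cdots i}\cdots b_{i_mi\cdots i}$ (the diagonal entries of $\mathcal{A}\mathcal{B}$). Then \[\sigma(\mathcal{A}\mathcal{B})\subseteq\mathbf{B}=\bigcup_{\gamma\in C(\mathcal{A}\mathcal{B})}\Big\{z\in\mathbb{C}:\prod_{i\in\gamma}|z-c_{i\cdots i}|\le\prod_{i\in\gamma}\big(r_i(\mathcal{A})(R(\mathcal{B}))^{m-1}-|c_{i\cdots i}|\big)\Big\}\subseteq\mathbf{G},\] where $\mathbf{G}=\bigcup_{i\in[n]}\{z\in\mathbb{C}:|z-c_{i\cdots i}|\le r_i(\mathcal{A})(R(\mathcal{B}))^{m-1}-|c_{i\cdots i}|\}$.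
   Context: $[n]=\{1,\ldots,n\}$. $\mathbb{C}^{[m,n]}$ denotes the set of order $m$, dimension $n$ complex tensors. For a tensor $\mathcal{T}=(t_{i_1\cdots i_p})$ of order $p$ and dimension $n$: $r_i(\mathcal{T})=\sum_{i_2,\ldots,i_p=1}^n|t_{ii_2\cdots i_p}|$, $R(\mathcal{T})=\max_{i\in[n]}r_i(\mathcal{T})$. General product: $\mathcal{A}\mathcal{B}=(c_{i\alpha_1\cdots\alpha_{m-1}})$ is the order $(m-1)(k-1)+1$, dimension $n$ tensor with $c_{i\alpha_1\cdots\alpha_{m-1}}=\sum_{i_2,\ldots,i_m=1}^n a_{ii_2\cdots i_m}b_{i_2\alpha_1}\cdots b_{i_m\alpha_{m-1}}$, $i\in[n]$, $\alpha_j\in[n]^{k-1}$ (where $b_{j\alpha}$ with $\alpha=(j_2,\ldots,j_k)$ means $b_{jj_2\cdots j_k}$). Eigenvalues of a tensor $\mathcal{T}$ of order $p\ge2$: $\lambda\in\mathbb{C}$ such that there is a nonzero $x\in\mathbb{C}^n$ with $\sum_{i_2,\ldots,i_p=1}^n t_{ii_2\cdots i_p}x_{i_2}\cdots x_{i_p}=\lambda x_i^{p-1}$ for all $i\in[n]$; $\sigma(\mathcal{T})$ is the set of eigenvalues. Digraph: for a tensor $\mathcal{T}=(t_{i_1\cdots i_p})$ of dimension $n$, $\Gamma_{\mathcal{T}}$ has vertex set $[n]$ and arc set $\{(i,j): t_{ii_2\cdots i_p}\neq0 \text{ for some } (i_2,\ldots,i_p)\neq(i,\ldots,i) \text{ with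 } j\in\{i_2,\ldots,i_p\}\}$. A circuit is a sequence of distinct vertices $i_1,\ldots,i_q$ ($q\ge1$) with arcs $(i_1,i_2),\ldots,(i_{q-1},i_q),(i_q,i_1)$ (for $q=1$, a loop $(i_1,i_1)$); $C(\mathcal{T})$ is the set of circuits of $\Gamma_{\mathcal{T}}$, and $i\in\gamma$ means $i$ is a vertex of the circuit $\gamma$. $\Gamma_{\mathcal{T}}$ is called weakly connected if every vertex belongs to some circuit. *)

From HB Require Import structures.
From mathcomp Require Import all_boot all_order all_algebra.
Set Implicit Arguments. Unset Strict Implicit. Unset Printing Implicit Defensive.
Import Order.TTheory GRing.Theory Num.Theory.
Local Open Scope ring_scope.

(* An order-p (p >= 1), dimension-n tensor T = (t_{i i_2 ... i_p}) is encoded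
   as a function of its first index i and of the ffun (i_2,...,i_p) of the
   remaining p-1 indices. *)
Definition tensor (C : Type) (p n : nat) := 'I_n -> {ffun 'I_p.-1 -> 'I_n} -> C.

Section Tensors.
Variable C : numClosedFieldType.

Definition rowsum p n (T : tensor C p n) (i : 'I_n) : C :=
  \sum_(t : {ffun 'I_p.-1 -> 'I_n}) `|T i t|.

(* R(T) = max_i r_i(T)  (the r_i are nonnegative reals, 0 is a neutral) *)
Definition Rmax p n (T : tensor C p n) : C :=
  \big[Num.max/0]_(i < n) rowsum T i.

(* General product AB, of order (m-1)(k-1)+1: the remaining index
   (alpha_1,...,alpha_{m-1}), alpha_j in [n]^{k-1}, is stored blockwise,
   component l of alpha_j at position mxvec_index j l. *)
Definition tprod m k n (A : tensor C m n) (B : tensor C k n)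
  : tensor C ((m.-1 * k.-1).+1) n :=
  fun i alpha =>
    \sum_(t : {ffun 'I_m.-1 -> 'I_n})
       A i t * \prod_(j < m.-1) B (t j) [ffun l : 'I_k.-1 => alpha (mxvec_index j l)].

Definition tdiag p n (T : tensor C p n) (i : 'I_n) : C := T i [ffun => i].

Definition teigen p n (T : tensor C p n) (lambda : C) : Prop :=
  exists x : 'I_n -> C, (exists i, x i != 0) /\
    forall i, \sum_(t : {ffun 'I_p.-1 -> 'I_n}) T i t * \prod_(l < p.-1) x (t l)
              = lambda * x i ^+ p.-1.

Definition tarc p n (T : tensor C p n) (i j : 'I_n) : Prop :=
  exists t : {ffun 'I_p.-1 -> 'I_n},
    [/\ T i t != 0, t != [ffun => i] & exists l, t l = j].

Definition tcircuit p n (T : tensor C p n) (s : seq 'I_n) : Prop :=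
  [/\ s != [::], uniq s &
      (forall q : nat, (q < size s)%N ->
         forall d : 'I_n, tarc T (nth d s q) (nth d s ((q.+1) %% size s)%N))].

Definition weakly_connected p n (T : tensor C p n) : Prop :=
  forall i : 'I_n, exists s, tcircuit T s /\ i \in s.

End Tensors.

(* Let x be an eigenvector for z and let f send each vertex i to an out-neighbour
   j of i in the digraph maximising |x_j|. With N = (m-1)(k-1), the eigen-equation
   at i gives |z - c_i| |x_i|^N <= (r_i(AB) - |c_i|) |x_{f i}|^N, and
   r_i(AB) <= r_i(A) R(B)^(m-1). Following f from a vertex where x does not vanish
   we reach a circuit of the digraph on which x does not vanish either (unless z
   is a diagonal entry, a trivial case); multiplying the inequalities along it,
   the factors |x_i|^N cancel since f permutes the circuit. For the second
   inclusion, |z - c_i| > rad_i for every vertex of a circuit would reverse the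
   product inequality. *)
From HB Require Import structures.
From mathcomp Require Import all_boot all_order all_algebra.
Import Order.TTheory GRing.Theory Num.Theory.

Lemma orbit_reaches_cycle {T : finType} (f : T -> T) (x : T) :
  exists y d, [/\ 0 < d, iter d f y = y, uniq (traject f y d) & fconnect f x y].
Proof.
have : looping f x #|T|.
  apply/negbNE; rewrite -looping_uniq; apply/negP => /card_uniqP.
  rewrite size_traject => h; have := max_card (mem (traject f x #|T|.+1)).
  by rewrite h ltnn.
case/trajectP => a lt_a eqa.
pose P d := [exists y, [&& 0 < d, iter d f y == y & fconnect f x y]].
have exP : exists d, P d.
  exists (#|T| - a); apply/existsP; exists (iter a f x).
  rewrite subn_gt0 lt_a -iterD subnK ?(ltnW lt_a) // eqa eqxx /=.
  exact: fconnect_iter.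
case: (ex_minnP exP) => d /existsP [y /and3P [d_gt0 /eqP dy xy]] dmin.
exists y, d; split=> //.
case: d d_gt0 dy dmin => // d _ dy dmin.
rewrite looping_uniq; apply/negP => /trajectP [b lt_b eqb].
have : P b.+1 by apply/existsP; exists y; rewrite xy andbT /= -eqb -iterS dy eqxx.
by move/dmin; rewrite ltnS leqNgt lt_b.
Qed.

Lemma perm_map_traject_cycle {T : eqType} (f : T -> T) y d :
  0 < d -> iter d f y = y -> perm_eq (map f (traject f y d)) (traject f y d).
Proof.
case: d => // d _ dy.
have -> : map f (traject f y d.+1) = traject f (f y) d.+1.
  by elim: d.+1 y {dy} => //= e IH y; rewrite IH.
by rewrite trajectSr trajectS -iterSr dy perm_rcons.
Qed.

Local Open Scope ring_scope.

Lemma prod_le_has_le {R : numDomainType} {I : eqType} {s : seq I} {a b : I -> R} :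
  s != [::] -> (forall i, 0 <= a i) -> (forall i, 0 <= b i) ->
  \prod_(i <- s) a i <= \prod_(i <- s) b i -> has (fun i => a i <= b i) s.
Proof.
move=> s_nz a_ge0 b_ge0 le_ab; apply/negPn/negP => /hasPn a_gt_b.
suff /lt_geF : \prod_(i <- s) b i < \prod_(i <- s) a i by rewrite le_ab.
rewrite big_seq [X in _ < X]big_seq; apply: ltr_prod => [|i /a_gt_b].
  by case: s s_nz {le_ab a_gt_b} => // i s _; rewrite /= mem_head.
by rewrite b_ge0 real_ltNge ?ger0_real.
Qed.

Lemma bigmax_nonneg_ub {R : numDomainType} {I : eqType} (r : seq I) {F : I -> R} :
  (forall i, 0 <= F i) ->
  0 <= \big[Num.max/0]_(i <- r) F i /\
  forall i, i \in r -> F i <= \big[Num.max/0]_(i <- r) F i.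
Proof.
move=> F_ge0; elim: r => [|j r [M_ge0 M_ub]]; first by rewrite big_nil.
rewrite big_cons; have /ger0_real Fj_real := F_ge0 j; have /ger0_real M_real := M_ge0.
have [le_FjM|/ltW le_MFj] := real_leP Fj_real M_real.
  split=> // i; rewrite inE => /predU1P [->|] //; exact: M_ub.
split=> // i; rewrite inE => /predU1P [->|/M_ub] //.
by move/le_trans; apply.
Qed.

Section Tensors.
Variable C : numClosedFieldType.

Lemma rowsum_ge0 {p n} (T : tensor C p n) i : 0 <= rowsum T i.
Proof. exact: sumr_ge0. Qed.

Lemma rowsum_le_Rmax {p n} (T : tensor C p n) i : rowsum T i <= Rmax T.
Proof.
by have [_ ->] := bigmax_nonneg_ub (index_enum 'I_n) (rowsum_ge0 T).
Qed.

Lemma rowsum_sub_tdiag_ge0 {p n} (T : tensor C p n) i : 0 <= rowsum T i - `|tdiag T i|.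
Proof. by rewrite subr_ge0 /rowsum (bigD1 [ffun => i]) //= lerDl sumr_ge0. Qed.

Lemma sum_prod_ffun_blocks {a b n} (g : 'I_a -> {ffun 'I_b -> 'I_n} -> C) :
  \sum_(alpha : {ffun 'I_(a * b) -> 'I_n})
     \prod_(j < a) g j [ffun l => alpha (mxvec_index j l)]
  = \prod_(j < a) \sum_(beta : {ffun 'I_b -> 'I_n}) g j beta.
Proof.
rewrite bigA_distr_bigA /=.
pose glue (F : {ffun 'I_a -> {ffun 'I_b -> 'I_n}}) : {ffun 'I_(a * b) -> 'I_n} :=
  [ffun q => let jl := enum_val (cast_ord (esym (mxvec_cast a b)) q) in F jl.1 jl.2].
pose split (alpha : {ffun 'I_(a * b) -> 'I_n}) : {ffun 'I_a -> {ffun 'I_b -> 'I_n}} :=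
  [ffun j => [ffun l => alpha (mxvec_index j l)]].
have glueK : cancel glue split.
  move=> F; apply/ffunP => j; apply/ffunP => l; rewrite !ffunE /mxvec_index.
  by rewrite cast_ordK enum_rankK.
rewrite (reindex glue) /=; last first.
  exists split => [F _|alpha _]; first exact: glueK.
  apply/ffunP => q; rewrite !ffunE; case/mxvec_indexP: q => j l.
  by rewrite /mxvec_index cast_ordK enum_rankK /= !ffunE.
apply: eq_bigr => F _; apply: eq_bigr => j _; congr (g j _).
by rewrite -[in RHS](glueK F) ffunE.
Qed.

Lemma rowsum_tprod_le m k n (A : tensor C m n) (B : tensor C k n) i :
  rowsum (tprod A B) i <= rowsum A i * Rmax B ^+ m.-1.
Proof.
rewrite /rowsum /tprod /=.
apply: le_trans (_ : \sum_(alpha : {ffun 'I_(m.-1 * k.-1) -> 'I_n})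
   \sum_(t : {ffun 'I_m.-1 -> 'I_n}) `|A i t| *
     \prod_(j < m.-1) `|B (t j) [ffun l => alpha (mxvec_index j l)]| <= _).
  apply: ler_sum => alpha _; apply: le_trans (ler_norm_sum _ _ _) _.
  by apply: ler_sum => t _; rewrite normrM normr_prod.
rewrite exchange_big /= mulr_suml; apply: ler_sum => t _.
rewrite -mulr_sumr; apply: ler_wpM2l => //.
rewrite (sum_prod_ffun_blocks (fun j beta => `|B (t j) beta|)).
rewrite -[X in Rmax B ^+ X]card_ord -prodr_const.
by apply: ler_prod => j _; rewrite rowsum_le_Rmax sumr_ge0.
Qed.

Definition tarcb {p n} (T : tensor C p n) (i j : 'I_n) : bool :=
  [exists t, [&& T i t != 0, t != [ffun => i] & [exists l, t l == j]]].

Lemma tarcP {p n} (T : tensor C p n) i j : reflect (tarc T i j) (tarcb T i j).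
Proof.
apply: (iffP existsP) => [[t /and3P [Tt_nz t_ndiag /existsP [l /eqP tl]]]|].
  by exists t; split=> //; exists l.
case=> t [Tt_nz t_ndiag [l tl]]; exists t; rewrite Tt_nz t_ndiag /=.
by apply/existsP; exists l; rewrite tl.
Qed.

Lemma traject_tcircuit {p n} (T : tensor C p n) (f : 'I_n -> 'I_n) y d :
  (0 < d)%N -> iter d f y = y -> uniq (traject f y d) ->
  (forall i, tarc T i (f i)) -> tcircuit T (traject f y d).
Proof.
move=> d_gt0 dy uniq_yd f_arc; split=> //; first by case: d d_gt0 {dy uniq_yd}.
move=> q; rewrite size_traject => lt_qd e.
have nthE r : (r < d)%N -> nth e (traject f y d) r = iter r f y.
  by move=> lt_rd; rewrite (set_nth_default y) ?size_traject // nth_traject.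
rewrite nthE //; suff -> : nth e (traject f y d) (q.+1 %% d) = f (iter q f y) by [].
case: (ltngtP q.+1 d) => [lt_Sqd|lt_dSq|Sqd].
- by rewrite modn_small // nthE.
- by rewrite ltnS leqNgt lt_qd in lt_dSq.
- by rewrite Sqd modnn nthE //= -iterS Sqd dy.
Qed.

Section EigenvalueInclusion.
Variables (N n : nat) (T : tensor C N.+1 n) (z : C) (x : 'I_n -> C).
Hypothesis eigen_eq : forall i,
  \sum_(t : {ffun 'I_N -> 'I_n}) T i t * \prod_(l < N) x (t l) = z * x i ^+ N.

Lemma eigen_row_bound i M : 0 <= M -> (forall j, tarcb T i j -> `|x j| <= M) ->
  `|z - tdiag T i| * `|x i| ^+ N <= (rowsum T i - `|tdiag T i|) * M ^+ N.
Proof.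
move=> M_ge0 M_ub; pose t0 : {ffun 'I_N -> 'I_n} := [ffun => i].
have x_t0 : \prod_(l < N) x (t0 l) = x i ^+ N.
  by rewrite -[X in _ ^+ X]card_ord -prodr_const; apply: eq_bigr => l _; rewrite ffunE.
have off_diag : (z - tdiag T i) * x i ^+ N
     = \sum_(t | t != t0) T i t * \prod_(l < N) x (t l).
  by rewrite mulrBl -eigen_eq (bigD1 t0) //= x_t0 /tdiag addrAC subrr add0r.
have -> : rowsum T i - `|tdiag T i| = \sum_(t | t != t0) `|T i t|.
  by rewrite /rowsum (bigD1 t0) //= addrAC subrr add0r.
rewrite -normrX -normrM off_diag mulr_suml.
apply: le_trans (ler_norm_sum _ _ _) _; apply: ler_sum => t t_ndiag.
rewrite normrM normr_prod.
have [->|Tt_nz] := eqVneq (T i t) 0; first by rewrite normr0 !mul0r.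
rewrite ler_wpM2l // -[X in M ^+ X]card_ord -prodr_const.
apply: ler_prod => l _; rewrite normr_ge0 /=; apply: M_ub; apply/existsP; exists t.
by rewrite Tt_nz t_ndiag /=; apply/existsP; exists l.
Qed.

Hypothesis connected : weakly_connected T.

Lemma exists_arc i : exists j, tarcb T i j.
Proof.
have [s [[_ _ s_arc] i_s]] := connected i.
have := s_arc (index i s) _ i; rewrite index_mem i_s nth_index // => /(_ isT).
by move/tarcP; exists (nth i s ((index i s).+1 %% size s)).
Qed.

Lemma exists_max_arc i :
  exists j, tarcb T i j && [forall j', tarcb T i j' ==> (`|x j'| <= `|x j|)].
Proof.
have [j0 arc_ij0] := exists_arc i.
case: (@real_arg_maxP _ _ j0 (tarcb T i) (fun j => `|x j|) arc_ij0).
  by move=> j _; exact: normr_real.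
move=> j arc_ij j_max.
by exists j; rewrite arc_ij; apply/forallP => j'; apply/implyP; exact: j_max.
Qed.

Definition max_succ i := xchoose (exists_max_arc i).

Lemma max_succP i :
  tarcb T i (max_succ i) /\ forall j, tarcb T i j -> `|x j| <= `|x (max_succ i)|.
Proof.
have /andP [arc_i /forallP max_i] := xchooseP (exists_max_arc i).
by split=> // j; move/implyP: (max_i j).
Qed.

Variable rad : 'I_n -> C.
Hypothesis rad_ge : forall i, rowsum T i - `|tdiag T i| <= rad i.

Lemma eigen_succ_bound i :
  `|z - tdiag T i| * `|x i| ^+ N <= rad i * `|x (max_succ i)| ^+ N.
Proof.
apply: le_trans (eigen_row_bound _ _ (normr_ge0 _) (proj2 (max_succP i))) _.
by rewrite ler_wpM2r ?exprn_ge0.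
Qed.

Hypothesis N_gt0 : (0 < N)%N.
Hypothesis z_ndiag : forall i, z != tdiag T i.

Lemma max_succ_support i : x i != 0 -> x (max_succ i) != 0.
Proof.
move=> xi_nz; apply: contraTneq (eigen_succ_bound i) => ->.
rewrite normr0 expr0n gtn_eqF //= mulr0 lt_geF //.
by rewrite mulr_gt0 ?exprn_gt0 ?normr_gt0 ?subr_eq0.
Qed.

Lemma teigen_circuit_bound : (exists i, x i != 0) ->
  exists s, tcircuit T s /\
    \prod_(i <- s) `|z - tdiag T i| <= \prod_(i <- s) rad i.
Proof.
case=> i0 xi0_nz; pose f := max_succ.
have [y [d [d_gt0 dy uniq_yd i0y]]] := orbit_reaches_cycle f i0.
have x_nz j : j \in traject f y d -> x j != 0.
  case/trajectP => q _ ->; rewrite -(iter_findex i0y) -iterD.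
  by elim: (_ + _)%N => //= a IH; apply: max_succ_support.
exists (traject f y d); split.
  by apply: traject_tcircuit => // i; apply/tarcP; exact: (max_succP i).1.
have x_cycle_gt0 : 0 < \prod_(j <- traject f y d) `|x j| ^+ N.
  rewrite big_seq; apply: prodr_gt0 => j /x_nz xj_nz.
  by rewrite exprn_gt0 // normr_gt0.
have x_cycle_perm : \prod_(j <- traject f y d) `|x (f j)| ^+ N
                  = \prod_(j <- traject f y d) `|x j| ^+ N.
  rewrite -(big_map f xpredT (fun j => `|x j| ^+ N)).
  exact/perm_big/perm_map_traject_cycle.
rewrite -(ler_pM2r x_cycle_gt0) -{2}x_cycle_perm -!big_split /=.
by apply: ler_prod => j _; rewrite eigen_succ_bound mulr_ge0 ?exprn_ge0.
Qed.

End EigenvalueInclusion.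

Arguments teigen_circuit_bound {N n T z x} eigen_eq connected {rad}.

Lemma teigen_brauer N n (T : tensor C N.+1 n) (rad : 'I_n -> C) z :
  (0 < N)%N -> weakly_connected T ->
  (forall i, rowsum T i - `|tdiag T i| <= rad i) -> teigen T z ->
  exists s, tcircuit T s /\
    \prod_(i <- s) `|z - tdiag T i| <= \prod_(i <- s) rad i.
Proof.
move=> N_gt0 connected rad_ge [x [x_nz eigen_eq]].
have [/existsP [j /eqP z_diag]|/existsPn z_ndiag] := boolP [exists j, z == tdiag T j].
  have [s [s_circuit j_s]] := connected j; exists s; split=> //.
  rewrite (big_rem j) //= z_diag subrr normr0 mul0r.
  by apply: prodr_ge0 => i _; exact: le_trans (rowsum_sub_tdiag_ge0 T i) (rad_ge i).
exact: (teigen_circuit_bound eigen_eq connected rad_ge N_gt0 z_ndiag x_nz).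
Qed.

End Tensors.

Theorem theorem4p4 (C : numClosedFieldType) (m k n : nat)
  (A : tensor C m n) (B : tensor C k n) :
  (2 <= m)%N -> (2 <= k)%N -> (1 <= n)%N ->
  weakly_connected (tprod A B) ->
  let c := tdiag (tprod A B) in
  let rad := fun i => rowsum A i * Rmax B ^+ m.-1 - `|c i| in
  let inB := fun z : C => exists s : seq 'I_n, tcircuit (tprod A B) s /\
       \prod_(i <- s) `|z - c i| <= \prod_(i <- s) rad i in
  let inG := fun z : C => exists i : 'I_n, `|z - c i| <= rad i in
  (forall z, teigen (tprod A B) z -> inB z) /\ (forall z, inB z -> inG z).
Proof.
move=> m_ge2 k_ge2 _ connected c rad inB inG.
have rad_ge i : rowsum (tprod A B) i - `|c i| <= rad i.
  by rewrite lerB // rowsum_tprod_le.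
split=> [z eigen_z|z [s [[s_nz _ _] le_prod]]].
  apply: teigen_brauer connected rad_ge eigen_z.
  by rewrite muln_gt0 -!subn1 !subn_gt0 m_ge2.
have rad_ge0 i : 0 <= rad i := le_trans (rowsum_sub_tdiag_ge0 _ (tprod A B) i) (rad_ge i).
have /hasP [i _] := prod_le_has_le s_nz (fun i => normr_ge0 _) rad_ge0 le_prod.
by exists i.
Qed.
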